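(* Let $Y,Z$ be finite-dimensional real or complex vector spaces, let $f$ be a vector field on $Y$, let $F\colon Y\to Z$ be quadratic, and let $g,\gamma$ be vector fields on $Z$ such that $F'(y)f(y)=g(F(y))$ and $F''(f(y),f(y))=\gamma(F(y))$ for all $y\in Y$. Let nonzero $b_1,\dots,b_s$ and $h>0$ be given, and suppose $y_0,y_1,Y_1,\dots,Y_s\in Y$ satisfy the SyDIRK equations \[ Y_i = y_0 + h\sum_{j=1}^{i-1} b_j f(Y_j) + \frac h2 b_i f(Y_i)\ (i=1,\dots,s),\qquad y_1 = y_0 + h\sum_{i=1}^s b_i f(Y_i). \] Then $z_0:=F(y_0)$, $Z_i:=F(Y_i)$, $z_1:=F(y_1)$ satisfy \[ Z_i = z_0 + h\sum_{j=1}^{i-1} b_j g(Z_j) + \frac h2 b_i g(Z_i) - \frac{h^2}{8} b_i^2\gamma(Z_i)\ (i=1,\dots,s),\qquad z_1 = z_0 + h\sum_{i=1}^s b_i g(Z_i). \]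
   Context: A map $F\colon Y\to Z$ is quadratic if for every $y_0\in Y$, $F(y)=F(y_0)+F'(y_0)(y-y_0)+\tfrac12F''(y-y_0,y-y_0)$ for all $y$, with $F''$ a constant symmetric bilinear map $Y\times Y\to Z$. *)

From HB Require Import structures.
From mathcomp Require Import all_boot all_order all_algebra.
Set Implicit Arguments. Unset Strict Implicit. Unset Printing Implicit Defensive.
Import Order.TTheory GRing.Theory Num.Theory.
Local Open Scope ring_scope.

(* F : Y -> Z is quadratic with first derivative F1 (F1 y0 = F'(y0), a linear
   map Y -> Z) and constant symmetric bilinear second derivative F2 = F''. *)
Definition is_quadratic (K : numFieldType) (Y Z : vectType K)
    (F : Y -> Z) (F1 : Y -> Y -> Z) (F2 : Y -> Y -> Z) : Prop :=
  [/\ (forall y0 : Y, linear (F1 y0)),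
      (forall u : Y, linear (F2 u)),
      (forall u v : Y, F2 u v = F2 v u) &
      (forall y0 y : Y,
          F y = F y0 + F1 y0 (y - y0) + 2%:R^-1 *: F2 (y - y0) (y - y0))].

From HB Require Import structures.
From mathcomp Require Import all_boot all_order all_algebra.
From mathcomp Require Import ring.
Set Implicit Arguments. Unset Strict Implicit. Unset Printing Implicit Defensive.
Import Order.TTheory GRing.Theory Num.Theory.
Local Open Scope ring_scope.

(* A SyDIRK step is a composition of implicit midpoint steps: with
   W_i := y0 + h (b_1 f(Y_1) + ... + b_{i-1} f(Y_{i-1})) and c := h b_i / 2,
   the stage Y_i is the midpoint W_i + c f(Y_i), and W_{i+1} = Y_i + c f(Y_i).
   Expanding the quadratic map F exactly at Y_i in the directions -c f(Y_i)
   and +c f(Y_i) gives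
     F(W_i)     = Z_i - c g(Z_i) + c^2/2 gamma(Z_i),
     F(W_{i+1}) = Z_i + c g(Z_i) + c^2/2 gamma(Z_i),
   so the first identity is the stage equation for Z_i and the difference of
   the two is F(W_{i+1}) = F(W_i) + h b_i g(Z_i); summing over i gives z_1. *)

Lemma big_ord_ltS (V : nmodType) (s : nat) (G : 'I_s -> V) (i : 'I_s) :
  \sum_(j < s | (j < i.+1)%N) G j = \sum_(j < s | (j < i)%N) G j + G i.
Proof.
rewrite (bigD1 i) //= addrC; congr (_ + _).
apply: eq_bigl => j; rewrite ltnS leq_eqVlt -val_eqE.
by case: eqVneq => [->|_]; rewrite ?ltnn ?andbT.
Qed.

Section SyDIRKQuadraticImage.

Variables (K : numFieldType) (Y Z : vectType K).
Variables (f : Y -> Y) (F : Y -> Z) (F1 F2 : Y -> Y -> Z) (g gamma : Z -> Z).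
Hypothesis quadF : is_quadratic F F1 F2.
Hypothesis F1f : forall y, F1 y (f y) = g (F y).
Hypothesis F2f : forall y, F2 (f y) (f y) = gamma (F y).

Lemma quadratic_shift (y : Y) (c : K) :
  F (y + c *: f y) = F y + c *: g (F y) + (c ^+ 2 / 2%:R) *: gamma (F y).
Proof.
case: quadF => F1_lin F2_lin F2_sym expandF.
rewrite (expandF y) [y + _]addrC addrK.
rewrite (scalable_linear (F1_lin y)) F1f.
rewrite (scalable_linear (F2_lin _)) F2_sym (scalable_linear (F2_lin _)) F2f.
by rewrite !scalerA -mulrA -expr2 mulrC.
Qed.

Lemma implicit_midpoint_quadratic (w yc : Y) (c : K) :
  yc = w + c *: f yc ->
  F yc = F w + c *: g (F yc) - (c ^+ 2 / 2%:R) *: gamma (F yc)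
  /\ F (yc + c *: f yc) = F w + (c + c) *: g (F yc).
Proof.
move=> midpoint.
have -> : w = yc + (- c) *: f yc by rewrite scaleNr {1}midpoint addrK.
rewrite !quadratic_shift sqrrN scaleNr; split.
  by rewrite [_ + c *: _]addrAC addrNK addrK.
by rewrite scalerDl [RHS]addrAC addrA addrNK.
Qed.

Variables (s : nat) (b : 'I_s -> K) (h : K) (y0 : Y) (Ys : 'I_s -> Y).
Hypothesis sydirk_stage : forall i : 'I_s,
  Ys i = y0 + h *: (\sum_(j < s | (j < i)%N) b j *: f (Ys j))
            + (h / 2%:R * b i) *: f (Ys i).

Definition stage_base (n : nat) : Y :=
  y0 + h *: (\sum_(j < s | (j < n)%N) b j *: f (Ys j)).

Definition stage_base_image (n : nat) : Z :=
  F y0 + h *: (\sum_(j < s | (j < n)%N) b j *: g (F (Ys j))).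

Lemma stage_base_succ (i : 'I_s) :
  stage_base i.+1 = Ys i + (h / 2%:R * b i) *: f (Ys i).
Proof.
rewrite /stage_base big_ord_ltS scalerDr scalerA addrA.
have -> : h * b i = h / 2%:R * b i + h / 2%:R * b i by field.
by rewrite scalerDl addrA -sydirk_stage.
Qed.

Lemma stage_midpoint (i : 'I_s) :
  F (stage_base i) = stage_base_image i ->
  F (Ys i) = stage_base_image i + (h / 2%:R * b i) *: g (F (Ys i))
             - (h ^+ 2 / 8%:R * b i ^+ 2) *: gamma (F (Ys i))
  /\ F (stage_base i.+1) = stage_base_image i.+1.
Proof.
move=> base_i; have [stageF baseF] := implicit_midpoint_quadratic (sydirk_stage i).
rewrite -/(stage_base i) base_i in stageF baseF; split.
  by rewrite [LHS]stageF; congr (_ - _ *: _); field.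
rewrite stage_base_succ baseF /stage_base_image big_ord_ltS scalerDr addrA.
by rewrite scalerA; congr (_ + _ *: _); field.
Qed.

Lemma stage_base_quadratic (n : nat) :
  (n <= s)%N -> F (stage_base n) = stage_base_image n.
Proof.
elim: n => [|n IHn] le_ns.
  by rewrite /stage_base /stage_base_image !big_pred0 // !scaler0 !addr0.
exact: (@stage_midpoint (Ordinal le_ns) (IHn (ltnW le_ns))).2.
Qed.

Lemma sydirk_quadratic_stages (i : 'I_s) :
  F (Ys i) = F y0 + h *: (\sum_(j < s | (j < i)%N) b j *: g (F (Ys j)))
             + (h / 2%:R * b i) *: g (F (Ys i))
             - (h ^+ 2 / 8%:R * b i ^+ 2) *: gamma (F (Ys i)).
Proof. exact: (stage_midpoint (stage_base_quadratic (ltnW (ltn_ord i)))).1. Qed.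

Lemma sydirk_quadratic_update :
  F (y0 + h *: (\sum_(i < s) b i *: f (Ys i)))
  = F y0 + h *: (\sum_(i < s) b i *: g (F (Ys i))).
Proof.
have := stage_base_quadratic (leqnn s).
by rewrite /stage_base /stage_base_image !(eq_bigl _ _ (fun j => ltn_ord j)).
Qed.

End SyDIRKQuadraticImage.

Theorem corollary2p8 (K : numFieldType) (Y Z : vectType K)
    (f : Y -> Y) (F : Y -> Z) (F1 F2 : Y -> Y -> Z) (g gamma : Z -> Z)
    (s : nat) (b : 'I_s -> K) (h : K) (y0 y1 : Y) (Ys : 'I_s -> Y) :
  is_quadratic F F1 F2 ->
  (forall y : Y, F1 y (f y) = g (F y)) ->
  (forall y : Y, F2 (f y) (f y) = gamma (F y)) ->
  (forall i : 'I_s, b i != 0) ->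
  0 < h ->
  (forall i : 'I_s,
     Ys i = y0 + h *: (\sum_(j < s | (j < i)%N) b j *: f (Ys j))
               + (h / 2%:R * b i) *: f (Ys i)) ->
  y1 = y0 + h *: (\sum_(i < s) b i *: f (Ys i)) ->
  (forall i : 'I_s,
     F (Ys i) = F y0 + h *: (\sum_(j < s | (j < i)%N) b j *: g (F (Ys j)))
                + (h / 2%:R * b i) *: g (F (Ys i))
                - (h ^+ 2 / 8%:R * b i ^+ 2) *: gamma (F (Ys i)))
  /\ F y1 = F y0 + h *: (\sum_(i < s) b i *: g (F (Ys i))).
Proof.
move=> quadF F1f F2f _ _ stages ->; split.
  exact (sydirk_quadratic_stages quadF F1f F2f stages).
exact (sydirk_quadratic_update quadF F1f F2f stages).
Qed.
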